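(* Let $\mathbb{X}\subseteq\mathbb{R}^{d_{\mathbb{X}}}$ and $\tilde{\mathbb{X}}\subseteq\mathbb{R}^{d_{\mathbb{X}}}$, let $p(x)$ be a probability distribution on $\mathbb{X}$ and $p(\tilde x\mid x)$ a conditional distribution on $\tilde{\mathbb{X}}$ (the distribution of augmentations $\tilde x$ of $x$). Let $f_\theta:\mathbb{X}\to\mathbb{R}^{d_{\mathbb{Z}}}$ (encoder; it is also applied to augmentations $\tilde x$), $h_\psi:\mathbb{R}^{d_{\mathbb{Z}}}\to\mathbb{R}^{d_{\mathbb{Z}}}$ (aligner) and a continuously differentiable $g_\phi:\mathbb{R}^{d_{\mathbb{Z}}}\to\mathbb{R}^{d_{\mathbb{X}}}$ (decoder). Define $$\mathcal{L}_{\mathrm{RC}}=\mathbb{E}_{p(x)}\mathbb{E}_{p(\tilde x|x)}\|g_\phi(h_\psi(f_\theta(\tilde x)))-x\|_2,\qquad \mathcal{L}_{\mathrm{CL}}=\mathbb{E}_{p(x)}\mathbb{E}_{p(\tilde x|x)}\|h_\psi(f_\theta(\tilde x))-f_\theta(x)\|_2,$$ $$\mathcal{L}_{\mathrm{reg}}=\mathbb{E}_{p(x)}\|g_\phi(f_\theta(x))-x\|_2 .$$ Let $\lambda_{\max}$ and $\lambda_{\min}$ be the constants defined in the context below. If $\lambda_{\max}$ and $\lambda_{\min}$ are non-zero, then (1) $\mathcal{L}_{\mathrm{CL}}+\frac{1}{\lambda_{\max}}\mathcal{L}_{\mathrm{reg}}\ \ge\ \frac{1}{\lambda_{\max}}\mathcal{L}_{\mathrm{RC}}$,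 and (2) $\mathcal{L}_{\mathrm{RC}}+\mathcal{L}_{\mathrm{reg}}\ \ge\ \lambda_{\min}\,\mathcal{L}_{\mathrm{CL}}$.
   Context: $\|\cdot\|_2$ is the Euclidean norm; all expectations are assumed finite. (In the paper a stop-gradient operator is applied to $f_\theta(x)$ in $\mathcal{L}_{\mathrm{CL}}$ and $\mathcal{L}_{\mathrm{reg}}$; it does not change the values of the losses.) Definition of $\lambda_{\max},\lambda_{\min}$: for each pair $(x,\tilde x)$ set $a=f_\theta(x)$, $b=h_\psi(f_\theta(\tilde x))$. Writing $g_{\phi,j}$ for the $j$-th coordinate of $g_\phi$, by the mean value theorem for each $j=1,\dots,d_{\mathbb{X}}$ choose a point $\xi_j$ on the segment between $a$ and $b$ with $g_{\phi,j}(a)-g_{\phi,j}(b)=\nabla g_{\phi,j}(\xi_j)^\top(a-b)$, and let $G(x,\tilde x)\in\mathbb{R}^{d_{\mathbb{X}}\times d_{\mathbb{Z}}}$ be the matrix whose $j$-th row is $\nabla g_{\phi,j}(\xi_j)^\top$. Let $\hat\lambda_{\max}(x,\tilde x)^2$ and $\hat\lambda_{\min}(x,\tilde x)^2$ be the largest and smallest eigenvalues of $G(x,\tilde x)^\top G(x,\tilde x)$, with $\hat\lambda_{\max},\hat\lambda_{\min}\ge 0$. Then $\lambda_{\max}=\sup_{x,\tilde x}\hat\lambda_{\max}(x,\tilde x)$ and $\lambda_{\min}=\inf_{x,\tilde x}\hat\lambda_{\min}(x,\tilde x)$. *)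

From HB Require Import structures.
From mathcomp Require Import all_boot all_order all_algebra.
From mathcomp Require Import all_classical all_reals all_analysis.
Set Implicit Arguments. Unset Strict Implicit. Unset Printing Implicit Defensive.
Import Order.TTheory GRing.Theory Num.Theory.
Import numFieldNormedType.Exports.
Local Open Scope classical_set_scope.
Local Open Scope ring_scope.

Definition enorm {R : realType} {n : nat} (v : 'rV[R]_n) : R :=
  Num.sqrt (\sum_(i < n) v 0 i ^+ 2).

Definition ebasis {R : realType} {n : nat} (k : 'I_n) : 'rV[R]_n := delta_mx 0 k.

Definition C1 {R : realType} {m n : nat} (g : 'rV[R]_m -> 'rV[R]_n) : Prop :=
  (forall z, differentiable g z) /\ (forall v : 'rV[R]_m, continuous ('D_v g)).

Definition grad_coord {R : realType} {m n : nat} (g : 'rV[R]_m -> 'rV[R]_n)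
  (j : 'I_n) (z : 'rV[R]_m) : 'rV[R]_m :=
  \row_(k < m) ('D_(ebasis k) g z) 0 j.

Definition on_segment {R : realType} {m : nat} (a b xi : 'rV[R]_m) : Prop :=
  exists2 t : R, 0 <= t <= 1 & xi = (1 - t) *: a + t *: b.

Definition mvt_matrix {R : realType} {m n : nat} (g : 'rV[R]_m -> 'rV[R]_n)
  (xi : 'I_n -> 'rV[R]_m) : 'M[R]_(n, m) :=
  \matrix_(j < n, k < m) grad_coord g j (xi j) 0 k.

Definition mvt_choice {R : realType} {m n : nat} (g : 'rV[R]_m -> 'rV[R]_n)
  (a b : 'rV[R]_m) (xi : 'I_n -> 'rV[R]_m) : Prop :=
  forall j : 'I_n, on_segment a b (xi j) /\
    g a 0 j - g b 0 j = \sum_(k < m) grad_coord g j (xi j) 0 k * (a - b) 0 k.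

Definition eig_max {R : realType} {n : nat} (M : 'M[R]_n) : R :=
  sup [set a : R | eigenvalue M a].
Definition eig_min {R : realType} {n : nat} (M : 'M[R]_n) : R :=
  inf [set a : R | eigenvalue M a].

Definition lam_hat_max {R : realType} {m n : nat} (G : 'M[R]_(n, m)) : R :=
  Num.sqrt (eig_max (G^T *m G)).
Definition lam_hat_min {R : realType} {m n : nat} (G : 'M[R]_(n, m)) : R :=
  Num.sqrt (eig_min (G^T *m G)).

(* The mean-value choice writes g(a) - g(b) as G (a - b), G the mean-value matrix.
   The Rayleigh quotient of the symmetric matrix G^T G attains its extrema on the
   compact unit sphere, at eigenvectors, so
     lmin |a-b| <= lam_hat_min |a-b| <= |g a - g b| <= lam_hat_max |a-b| <= lmax |a-b|.
   With a = f x and b = h (f xt), the triangle inequality through x gives both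
   inequalities pointwise, and integrating against P gives them for the expectations. *)

From HB Require Import structures.
From mathcomp Require Import all_boot all_order all_algebra.
From mathcomp Require Import all_classical all_reals all_analysis.
From mathcomp Require Import ring lra.
Set Implicit Arguments. Unset Strict Implicit. Unset Printing Implicit Defensive.
Import Order.TTheory GRing.Theory Num.Theory.
Import numFieldNormedType.Exports.
Local Open Scope classical_set_scope.
Local Open Scope ring_scope.

Lemma discriminant_le (R : realFieldType) (a b c : R) :
  0 <= a -> (forall t, 0 <= a * t ^+ 2 + 2 * b * t + c) -> b ^+ 2 <= a * c.
Proof.
move=> a_ge0 pos; have [a0|a_neq0] := eqVneq a 0.
  have [->|b_neq0] := eqVneq b 0; first by rewrite a0 expr0n mul0r.
  have := pos (- (c + 1) / (2 * b)).
  have -> : 2 * b * (- (c + 1) / (2 * b)) = - (c + 1) by field; rewrite b_neq0.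
  rewrite a0 mul0r add0r => ?; lra.
have tmin : a * (a * (- b / a) ^+ 2 + 2 * b * (- b / a) + c) = a * c - b ^+ 2.
  by field.
have := mulr_ge0 a_ge0 (pos (- b / a)); rewrite tmin; lra.
Qed.

Section BilinearForm.
Variables (R : realType) (n : nat).
Implicit Types (B : 'M[R]_n) (u v w : 'rV[R]_n).

Definition bform B u v : R := (u *m B *m v^T) 0 0.

Lemma bformE B u v :
  bform B u v = \sum_(j < n) (\sum_(i < n) u 0 i * B i j) * v 0 j.
Proof. by rewrite /bform mxE; apply: eq_bigr => j _; rewrite !mxE. Qed.

Lemma bform1E u v : bform 1%:M u v = \sum_(i < n) u 0 i * v 0 i.
Proof. by rewrite /bform mulmx1 mxE; apply: eq_bigr => j _; rewrite !mxE. Qed.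

Lemma bformC B u v : B^T = B -> bform B u v = bform B v u.
Proof.
move=> sB; rewrite /bform.
have -> : (u *m B *m v^T) 0 0 = (u *m B *m v^T)^T 0 0 by rewrite [RHS]mxE.
by rewrite !trmx_mul trmxK sB mulmxA.
Qed.

Lemma bformDl B u v w : bform B (u + v) w = bform B u w + bform B v w.
Proof. by rewrite /bform !mulmxDl mxE. Qed.

Lemma bformDr B u v w : bform B u (v + w) = bform B u v + bform B u w.
Proof. by rewrite /bform linearD /= !mulmxDr mxE. Qed.

Lemma bformZl B c u w : bform B (c *: u) w = c * bform B u w.
Proof. by rewrite /bform -!scalemxAl mxE. Qed.

Lemma bformZr B c u w : bform B u (c *: w) = c * bform B u w.
Proof. by rewrite /bform linearZ /= -!scalemxAr mxE. Qed.

Lemma bformNl B u w : bform B (- u) w = - bform B u w.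
Proof. by rewrite -scaleN1r bformZl mulN1r. Qed.

Lemma bformNr B u w : bform B u (- w) = - bform B u w.
Proof. by rewrite -scaleN1r bformZr mulN1r. Qed.

Lemma bform0l B w : bform B 0 w = 0.
Proof. by rewrite /bform !mul0mx mxE. Qed.

Lemma bformDm B B' u v : bform (B + B') u v = bform B u v + bform B' u v.
Proof. by rewrite /bform mulmxDr mulmxDl mxE. Qed.

Lemma bformNm B u v : bform (- B) u v = - bform B u v.
Proof. by rewrite /bform mulmxN mulNmx mxE. Qed.

Lemma bform_scalar c u v : bform c%:M u v = c * bform 1%:M u v.
Proof. by rewrite /bform mul_mx_scalar mulmx1 -scalemxAl mxE. Qed.

Lemma bform_eigenvector B a u : u *m B = a *: u -> bform B u u = a * bform 1%:M u u.
Proof. by move=> uB; rewrite /bform uB mulmx1 -scalemxAl mxE. Qed.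

Lemma bform_Cauchy_Schwarz B u v : B^T = B -> (forall w, 0 <= bform B w w) ->
  bform B u v ^+ 2 <= bform B u u * bform B v v.
Proof.
move=> sB psd; apply: discriminant_le => // t.
have := psd (t *: u + v).
rewrite bformDl !bformDr !bformZl !bformZr (bformC v u sB).
by congr (0 <= _); ring.
Qed.

Lemma bform1_ge0 u : 0 <= bform 1%:M u u.
Proof. by rewrite bform1E sumr_ge0 // => i _; rewrite -expr2 sqr_ge0. Qed.

Lemma bform1_eq0 u : bform 1%:M u u = 0 -> u = 0.
Proof.
rewrite bform1E => /psumr_eq0P sq0; apply/rowP => i; rewrite mxE.
have /(_ i isT)/eqP := sq0 (fun k _ => ltac:(rewrite -expr2; exact: sqr_ge0)).
by rewrite mulf_eq0 orbb => /eqP.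
Qed.

Lemma continuous_bform B : continuous (fun v => bform B v v).
Proof.
rewrite (_ : (fun v => bform B v v) = fun v =>
    \sum_(j < n) (\sum_(i < n) v 0 i * B i j) * v 0 j); last first.
  by apply: funext => v; rewrite bformE.
have coord i : continuous (fun v : 'rV[R]_n => v 0 i) by exact: coord_continuous.
apply: continuous_big => [|j _]; first exact: add_continuous.
have lin : continuous (fun v : 'rV[R]_n => \sum_(i < n) v 0 i * B i j).
  apply: continuous_big => [|i _ v]; first exact: add_continuous.
  by apply: continuousM; [exact: coord | exact: cst_continuous].
by move=> v; apply: continuousM; [exact: lin | exact: coord].
Qed.

End BilinearForm.

Section EuclideanNorm.
Variables (R : realType) (n : nat).
Implicit Types (u v : 'rV[R]_n).

Lemma enormE u : enorm u = Num.sqrt (bform 1%:M u u).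
Proof.
by rewrite /enorm bform1E; congr Num.sqrt; apply: eq_bigr => i _; rewrite expr2.
Qed.

Lemma enorm_ge0 u : 0 <= enorm u.
Proof. exact: sqrtr_ge0. Qed.

Lemma enorm_sqr u : enorm u ^+ 2 = bform 1%:M u u.
Proof. by rewrite enormE sqr_sqrtr // bform1_ge0. Qed.

Lemma enormN u : enorm (- u) = enorm u.
Proof. by rewrite !enormE bformNl bformNr opprK. Qed.

Lemma enormB u v : enorm (u - v) = enorm (v - u).
Proof. by rewrite -enormN opprB. Qed.

Lemma enormD u v : enorm (u + v) <= enorm u + enorm v.
Proof.
have sym1 : (1%:M : 'M[R]_n)^T = 1%:M by rewrite tr_scalar_mx.
have cs : bform 1%:M u v <= enorm u * enorm v.
  rewrite !enormE -sqrtrM ?bform1_ge0 //; apply: le_trans (ler_norm _) _.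
  rewrite -sqrtr_sqr ler_wsqrtr //; exact: bform_Cauchy_Schwarz (@bform1_ge0 _ _).
rewrite -(ger0_norm (addr_ge0 (enorm_ge0 u) (enorm_ge0 v))) -sqrtr_sqr enormE.
rewrite ler_wsqrtr // bformDl !bformDr (bformC v u sym1) sqrrD !enorm_sqr; lra.
Qed.

Lemma compact_unit_sphere : compact [set v : 'rV[R]_n | bform 1%:M v v = 1].
Proof.
have S_closed : closed [set v : 'rV[R]_n | bform 1%:M v v = 1].
  apply: (@preimage_closed _ _ (fun v => bform 1%:M v v) [set x | x = 1]).
    by move=> v _; exact: continuous_bform.
  exact: closed_eq.
apply: (subclosed_compact S_closed
  (rV_compact (fun _ => @segment_compact R (-1) 1))).
move=> v /= Sv i; rewrite (ord1 ord0) /= in_itv /=.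
have : v 0 i * v 0 i <= 1.
  rewrite -Sv bform1E (bigD1 i) //= lerDl sumr_ge0 // => k _.
  by rewrite -expr2 sqr_ge0.
by move=> ?; nra.
Qed.


End EuclideanNorm.

Section Rayleigh.
Variables (R : realType) (n : nat) (B : 'M[R]_n).
Implicit Types (v w : 'rV[R]_n).

Lemma rayleigh_max_attained : (0 < n)%N ->
  exists2 v, bform 1%:M v v = 1 &
    forall w, bform B w w <= bform B v v * bform 1%:M w w.
Proof.
move=> n_gt0; pose S := [set v : 'rV[R]_n | bform 1%:M v v = 1].
have S0 : S !=set0.
  exists (delta_mx 0 (Ordinal n_gt0)).
  by rewrite /S /= /bform mulmx1 trmx_delta mul_delta_mx mxE !eqxx.
have [v /set_mem Sv v_max] :=
  compact_EVT_max S0 (@compact_unit_sphere R n)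
    (continuous_subspaceT (@continuous_bform _ _ B)).
exists v => // w; have [w0|w_neq0] := eqVneq (bform 1%:M w w) 0.
  by rewrite (bform1_eq0 w0) !bform0l mulr0.
have w_gt0 : 0 < bform 1%:M w w by rewrite lt_def w_neq0 bform1_ge0.
pose r := (Num.sqrt (bform 1%:M w w))^-1.
have r2 : r ^+ 2 * bform 1%:M w w = 1.
  by rewrite /r exprVn sqr_sqrtr ?mulVf ?(ltW w_gt0) ?gt_eqF.
have := v_max (r *: w); rewrite inE /S /= bformZl bformZr mulrA -expr2 r2.
move=> /(_ erefl); rewrite bformZl bformZr mulrA -expr2 => rw_le.
have r2_gt0 : 0 < r ^+ 2 by rewrite exprn_gt0 // invr_gt0 sqrtr_gt0.
by rewrite -(ler_pM2l r2_gt0) mulrCA r2 mulr1.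
Qed.

Lemma rayleigh_maximizer_eigenvector v : B^T = B -> bform 1%:M v v = 1 ->
    (forall w, bform B w w <= bform B v v * bform 1%:M w w) ->
  v *m B = bform B v v *: v.
Proof.
move=> symB v1 v_max; set M := bform B v v.
(* [M - B] is positive semidefinite and vanishes at [v], so by Cauchy-Schwarz
   [v] lies in its kernel. *)
pose C := M%:M - B.
have symC : C^T = C by rewrite /C linearB /= tr_scalar_mx symB.
have CE w : bform C w w = M * bform 1%:M w w - bform B w w.
  by rewrite /C bformDm bformNm bform_scalar.
have C_psd w : 0 <= bform C w w by rewrite CE subr_ge0.
have Cv w : bform C v w = 0.
  have := bform_Cauchy_Schwarz v w symC C_psd; rewrite CE v1 mulr1 subrr mul0r.
  by move=> sq_le0; apply/eqP; rewrite -sqrf_eq0 eq_le sq_le0 sqr_ge0.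
have /bform1_eq0/eqP : bform 1%:M (v *m C) (v *m C) = 0.
  by rewrite -[RHS](Cv (v *m C)) /bform mulmx1.
by rewrite /C mulmxBr mul_mx_scalar subr_eq0 => /eqP <-.
Qed.

Lemma eigenvalue_le_rayleigh M a :
  (forall w, bform B w w <= M * bform 1%:M w w) -> eigenvalue B a -> a <= M.
Proof.
move=> bound /eigenvalueP [u uB u_neq0].
have u_gt0 : 0 < bform 1%:M u u.
  by rewrite lt_def bform1_ge0 andbT; apply: contra u_neq0 => /eqP/bform1_eq0 ->.
by have := bound u; rewrite (bform_eigenvector uB) ler_pM2r.
Qed.

Lemma rayleigh_le_eig_max w : B^T = B -> bform B w w <= eig_max B * bform 1%:M w w.
Proof.
move=> symB; have [n0|n_gt0] := posnP n.
  have sum0 (F : 'I_n -> R) : \sum_(i < n) F i = 0.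
    by apply: big1 => i _; move: (ltn_ord i); rewrite {2}n0.
  by rewrite bformE bform1E !sum0 mulr0.
have [v v1 v_max] := rayleigh_max_attained n_gt0.
have ub := eigenvalue_le_rayleigh v_max.
have v_eig : eigenvalue B (bform B v v).
  apply/eigenvalueP; exists v; first exact: rayleigh_maximizer_eigenvector.
  by apply/eqP => v0; move: v1; rewrite v0 bform0l => /eqP; rewrite eq_sym oner_eq0.
suff -> : eig_max B = bform B v v by [].
apply/le_anti/andP; split; first by apply: ge_sup => //; exists (bform B v v).
by apply: sup_upper_bound => //; split; exists (bform B v v).
Qed.

End Rayleigh.

Lemma eig_minE (R : realType) (n : nat) (B : 'M[R]_n) : eig_min B = - eig_max (- B).
Proof.
rewrite /eig_min /inf /eig_max; congr (- sup _).
apply/seteqP; split => a /=.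
  move=> [b /eigenvalueP [v vB v_neq0] <-]; apply/eigenvalueP; exists v => //.
  by rewrite mulmxN vB scaleNr.
move=> /eigenvalueP [v vB v_neq0]; exists (- a); last exact: opprK.
by apply/eigenvalueP; exists v; rewrite // scaleNr -vB mulmxN opprK.
Qed.

Lemma eig_min_le_rayleigh (R : realType) (n : nat) (B : 'M[R]_n) w :
  B^T = B -> eig_min B * bform 1%:M w w <= bform B w w.
Proof.
move=> symB; have symNB : (- B)^T = - B by rewrite linearN /= symB.
by have := rayleigh_le_eig_max w symNB; rewrite eig_minE bformNm mulNr; lra.
Qed.

Section SingularValueBounds.
Variables (R : realType) (p n : nat) (G : 'M[R]_(p, n)).

Lemma trmx_mulTmx : (G^T *m G)^T = G^T *m G.
Proof. by rewrite trmx_mul trmxK. Qed.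

Lemma enorm_mulmx_trE u : enorm (u *m G^T) = Num.sqrt (bform (G^T *m G) u u).
Proof. by rewrite enormE /bform !mulmx1 trmx_mul trmxK !mulmxA. Qed.

Lemma enorm_mulmx_tr_le u : enorm (u *m G^T) <= lam_hat_max G * enorm u.
Proof.
rewrite enorm_mulmx_trE enormE /lam_hat_max.
have := rayleigh_le_eig_max u trmx_mulTmx; set M := eig_max _ => /ler_wsqrtr.
move=> /le_trans; apply; have [M_ge0|M_lt0] := lerP 0 M; first by rewrite sqrtrM.
have /eqP -> : Num.sqrt (M * bform 1%:M u u) == 0.
  by rewrite sqrtr_eq0 mulr_le0_ge0 ?(ltW M_lt0) ?bform1_ge0.
by rewrite mulr_ge0 ?sqrtr_ge0.
Qed.

Lemma lam_hat_min_le_enorm u : lam_hat_min G * enorm u <= enorm (u *m G^T).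
Proof.
rewrite enorm_mulmx_trE enormE /lam_hat_min.
have := eig_min_le_rayleigh u trmx_mulTmx; set m := eig_min _ => /ler_wsqrtr.
apply: le_trans; have [m_ge0|m_lt0] := lerP 0 m; first by rewrite sqrtrM.
have /eqP -> : Num.sqrt m == 0 by rewrite sqrtr_eq0 ltW.
by rewrite mul0r sqrtr_ge0.
Qed.

End SingularValueBounds.

Lemma mvt_choice_subE (R : realType) (m n : nat) (g : 'rV[R]_m -> 'rV[R]_n)
    (a b : 'rV[R]_m) (xi : 'I_n -> 'rV[R]_m) :
  mvt_choice g a b xi -> g a - g b = (a - b) *m (mvt_matrix g xi)^T.
Proof.
move=> mvt; apply/rowP => j; rewrite !mxE (mvt j).2.
by apply: eq_bigr => k _; rewrite !mxE mulrC.
Qed.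

Section TriangleBounds.
Variables (R : realType) (m n : nat) (a b : 'rV[R]_m) (ga gb x : 'rV[R]_n).

Lemma lipschitz_triangle_le L : 0 < L ->
    enorm (ga - gb) <= L * enorm (a - b) ->
  L^-1 * enorm (gb - x) <= enorm (b - a) + L^-1 * enorm (ga - x).
Proof.
move=> L_gt0 lip.
have -> : enorm (b - a) + L^-1 * enorm (ga - x) =
    L^-1 * (L * enorm (b - a) + enorm (ga - x)).
  by rewrite mulrDr mulKf // gt_eqF.
apply: ler_wpM2l; first by rewrite invr_ge0 ltW.
rewrite (enormB b).
apply: (le_trans (y := enorm (ga - gb) + enorm (ga - x))); last by rewrite lerD2r.
have -> : gb - x = (gb - ga) + (ga - x) by rewrite addrA subrK.
by rewrite (enormB ga) enormD.
Qed.

Lemma colipschitz_triangle_le l :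
    l * enorm (a - b) <= enorm (ga - gb) ->
  l * enorm (b - a) <= enorm (gb - x) + enorm (ga - x).
Proof.
move=> colip; rewrite enormB (le_trans colip) //.
have -> : ga - gb = (ga - x) + (x - gb) by rewrite addrA subrK.
by apply: le_trans (enormD _ _) _; rewrite addrC (enormB gb).
Qed.

End TriangleBounds.

Lemma expectation_le_combination d (T : measurableType d) (R : realType)
    (P : probability T R) (X Y Z : T -> R) (a c : R) :
    P.-integrable setT (fun w => (X w)%:E) ->
    P.-integrable setT (fun w => (Y w)%:E) ->
    P.-integrable setT (fun w => (Z w)%:E) ->
    (forall w, a * X w <= Y w + c * Z w) ->
  (a%:E * 'E_P[X] <= 'E_P[Y] + c%:E * 'E_P[Z])%E.
Proof.
move=> iX iY iZ XYZ; rewrite unlock -!integralZl // -integralD //; last first.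
  exact: integrableZl.
apply: le_integral => //; first exact: integrableZl.
  by apply: integrableD => //; exact: integrableZl.
by move=> w _; rewrite -!EFinM -EFinD lee_fin.
Qed.

Lemma sup_neq0_has_sup (R : realType) (A : set R) : sup A != 0 -> has_sup A.
Proof. by apply: contraNP => /sup_out ->. Qed.

Lemma inf_neq0_has_inf (R : realType) (A : set R) : inf A != 0 -> has_inf A.
Proof. by apply: contraNP => /inf_out ->. Qed.

Theorem theorem1 (R : realType) (dX dZ : nat)
  (SX SXt : set 'rV[R]_dX)
  (d : measure_display) (Omega : measurableType d) (P : probability Omega R)
  (x xt : Omega -> 'rV[R]_dX)
  (f : 'rV[R]_dX -> 'rV[R]_dZ) (h : 'rV[R]_dZ -> 'rV[R]_dZ)
  (g : 'rV[R]_dZ -> 'rV[R]_dX)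
  (xi : 'rV[R]_dX -> 'rV[R]_dX -> 'I_dX -> 'rV[R]_dZ)
  (lmax lmin : R) :
  (forall w, SX (x w)) ->
  (forall w, SXt (xt w)) ->
  C1 g ->
  (forall a, SX a -> forall b, SXt b -> mvt_choice g (f a) (h (f b)) (xi a b)) ->
  lmax = sup [set lam_hat_max (mvt_matrix g (xi a b)) | a in SX & b in SXt] ->
  lmin = inf [set lam_hat_min (mvt_matrix g (xi a b)) | a in SX & b in SXt] ->
  P.-integrable setT (fun w => (enorm (g (h (f (xt w))) - x w))%:E) ->
  P.-integrable setT (fun w => (enorm (h (f (xt w)) - f (x w)))%:E) ->
  P.-integrable setT (fun w => (enorm (g (f (x w)) - x w))%:E) ->
  lmax != 0 -> lmin != 0 ->
  let L_RC := ('E_P[fun w => enorm (g (h (f (xt w))) - x w)])%E in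
  let L_CL := ('E_P[fun w => enorm (h (f (xt w)) - f (x w))])%E in
  let L_reg := ('E_P[fun w => enorm (g (f (x w)) - x w)])%E in
  ((lmax^-1)%:E * L_RC <= L_CL + (lmax^-1)%:E * L_reg)%E /\
  (lmin%:E * L_CL <= L_RC + L_reg)%E.
Proof.
(* [C1 g] is unused: it only guarantees the mean-value points [xi], which are given. *)
move=> Xw Xtw _ mvt lmaxE lminE iRC iCL ireg lmax_neq0 lmin_neq0 L_RC L_CL L_reg.
pose G w := mvt_matrix g (xi (x w) (xt w)).
have G_max w : lam_hat_max (G w) <= lmax.
  rewrite lmaxE; apply: sup_upper_bound; first by apply: sup_neq0_has_sup; rewrite -lmaxE.
  by exists (x w) => //; exists (xt w).
have G_min w : lmin <= lam_hat_min (G w).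
  rewrite lminE; apply: ge_inf; first by apply: (inf_neq0_has_inf _).2; rewrite -lminE.
  by exists (x w) => //; exists (xt w).
have lmax_gt0 (w : Omega) : 0 < lmax.
  by rewrite lt_def lmax_neq0 (le_trans (sqrtr_ge0 _) (G_max w)).
have diffE w : g (f (x w)) - g (h (f (xt w))) = (f (x w) - h (f (xt w))) *m (G w)^T.
  exact: mvt_choice_subE (mvt _ (Xw w) _ (Xtw w)).
split.
  apply: expectation_le_combination => // w.
  apply: lipschitz_triangle_le (lmax_gt0 w) _.
  rewrite diffE; apply: le_trans (enorm_mulmx_tr_le _ _) _.
  by apply: ler_wpM2r; [exact: enorm_ge0 | exact: G_max].
rewrite /L_reg -[X in (_ <= _ + X)%E]mul1e.
apply: expectation_le_combination => // w; rewrite mul1r.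
apply: colipschitz_triangle_le; rewrite diffE.
apply: le_trans (lam_hat_min_le_enorm _ _).
by apply: ler_wpM2r; [exact: enorm_ge0 | exact: G_min].
Qed.
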